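(* Let $\Delta^{-1},\varepsilon\gg p\gg\mu\gg d^{-1}$. Let $G$ be a graph with minimum degree $\delta(G)\ge\varepsilon d$ that contains no $p$-cut-dense subgraph of order $\mu d$. Then every set $S\subseteq V(G)$ with $|S|\le 10d$ satisfies $|N(S)|\ge 10\Delta|S|$.
   Context: A graph $F$ is $p$-cut-dense if for every partition $V(F)=A\cup B$ into disjoint sets, the number of edges of $F$ between $A$ and $B$ is at least $p|A||B|$. $N(S)$ is the set of vertices adjacent to some vertex of $S$. The hierarchy means: given $\Delta,\varepsilon$, $p$ is sufficiently small; given $p$, $\mu$ is sufficiently small; given $\mu$, $d$ is sufficiently large. *)

From mathcomp Require Import all_boot all_order all_algebra.
From mathcomp Require Import reals.
Set Implicit Arguments. Unset Strict Implicit. Unset Printing Implicit Defensive.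
Import Order.TTheory GRing.Theory Num.Theory.
Local Open Scope ring_scope.

Definition simple_graph (T : finType) (e : rel T) := symmetric e /\ irreflexive e.

Definition nbhd (T : finType) (e : rel T) (S : {set T}) : {set T} :=
  [set v | [exists u in S, e u v]].

Definition min_deg_ge (R : realFieldType) (T : finType) (e : rel T) (c : R) :=
  forall v : T, c <= (#|[set u | e v u]|)%:R.

Definition e_between (T : finType) (F : rel T) (A B : {set T}) : nat :=
  #|[set xy : T * T | (xy.1 \in A) && (xy.2 \in B) && F xy.1 xy.2]|.

Definition is_subgraph (T : finType) (e : rel T) (U : {set T}) (F : rel T) :=
  symmetric F /\ (forall x y, F x y -> e x y) /\ (forall x y, F x y -> (x \in U) && (y \in U)).

Definition cut_dense (R : realFieldType) (T : finType) (U : {set T}) (F : rel T) (p : R) :=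
  forall A B : {set T}, A :|: B = U -> [disjoint A & B] ->
    p * (#|A|)%:R * (#|B|)%:R <= (e_between F A B)%:R.

Definition has_cut_dense_subgraph (R : realFieldType) (T : finType) (e : rel T) (p m : R) :=
  exists (U : {set T}) (F : rel T),
    is_subgraph e U F /\ m <= (#|U|)%:R /\ cut_dense U F p.

From mathcomp Require Import all_boot all_order all_algebra.
From mathcomp Require Import reals ring lra.
From Stdlib Require Import Classical.
Set Implicit Arguments. Unset Strict Implicit. Unset Printing Implicit Defensive.
Import Order.TTheory GRing.Theory Num.Theory.
Local Open Scope ring_scope.

(* Let K = 1 + 10 Delta and alpha = eps / (K (10 K + 1)).  If |N(S)| < 10 Delta |S|, then
   W = S u N(S) has |W| <= K |S|, and the minimum degree gives e(W) >= eps d |S|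
   >= alpha |W| (|W| + d), edges counted as ordered pairs: W is heavy.  The potential
   alpha x (x + m) of a disjoint union A u B exceeds the potentials of A and B by exactly
   2 alpha |A| |B|, so splitting a heavy set along a cut with fewer than p |A| |B| <= alpha |A| |B|
   edges leaves a heavy part.  Iterating ends in a nonempty heavy p-cut-dense set Y, and
   e(Y) <= |Y|^2 then forces |Y| >= alpha d >= mu d. *)

Section Edges.
Variables (R : realFieldType) (T : finType) (e : rel T).

Definition edges (A B : {set T}) : R := \sum_(x in A) \sum_(y in B) (e x y : nat)%:R.

Lemma e_betweenE (A B : {set T}) : (e_between e A B)%:R = edges A B.
Proof.
rewrite /e_between -sum1_card natr_sum /edges pair_big /=.
under eq_bigl => xy do rewrite inE.
by rewrite big_mkcondr /=; apply: eq_bigr => xy _; case: (e _ _).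
Qed.

Lemma edges_ge0 (A B : {set T}) : 0 <= edges A B.
Proof. by do 2![apply: sumr_ge0 => ? _]; rewrite ler0n. Qed.

Lemma edges_le_card (A B : {set T}) : edges A B <= #|A|%:R * #|B|%:R.
Proof.
rewrite mulr_natl -sumr_const; apply: ler_sum => x _.
rewrite -sumr_const; apply: ler_sum => y _.
by case: (e x y); rewrite ?ler01.
Qed.

Lemma edges_subsetl (A A' B : {set T}) : A \subset A' -> edges A B <= edges A' B.
Proof.
move=> /setIidPr sAA'; rewrite [edges A' B](big_setID A) /= sAA' lerDl.
by apply: sumr_ge0 => x _; apply: sumr_ge0 => y _; rewrite ler0n.
Qed.

Lemma edges_setUl (A B C : {set T}) : [disjoint A & B] ->
  edges (A :|: B) C = edges A C + edges B C.
Proof. by move=> dAB; rewrite /edges -bigU //; apply: eq_bigl => x; rewrite !inE. Qed.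

Lemma edges_setUr (A B C : {set T}) : [disjoint B & C] ->
  edges A (B :|: C) = edges A B + edges A C.
Proof.
move=> dBC; rewrite /edges -big_split; apply: eq_bigr => x _.
by rewrite -bigU //; apply: eq_bigl => y; rewrite !inE.
Qed.

Hypothesis e_sym : symmetric e.

Lemma edgesC (A B : {set T}) : edges B A = edges A B.
Proof.
by rewrite /edges exchange_big; apply: eq_bigr => x _; apply: eq_bigr => y _; rewrite e_sym.
Qed.

Lemma edges_setU_self (A B : {set T}) : [disjoint A & B] ->
  edges (A :|: B) (A :|: B) = edges A A + edges B B + 2 * edges A B.
Proof.
move=> dAB; rewrite edges_setUl // !edges_setUr // [edges B A]edgesC; ring.
Qed.

End Edges.

Definition induced (T : finType) (e : rel T) (X : {set T}) : rel T :=
  fun x y => [&& e x y, x \in X & y \in X].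

Lemma induced_subgraph (T : finType) (e : rel T) (X : {set T}) :
  symmetric e -> is_subgraph e X (induced e X).
Proof.
move=> e_sym; split.
  by move=> x y; rewrite /induced e_sym; case: (x \in X); case: (y \in X); rewrite ?andbF.
by split=> x y /and3P[exy xX yX]; rewrite ?exy ?xX ?yX.
Qed.

Lemma edges_induced (R : realFieldType) (T : finType) (e : rel T) (X A B : {set T}) :
  A \subset X -> B \subset X -> edges R (induced e X) A B = edges R e A B.
Proof.
rewrite /edges => /subsetP sAX /subsetP sBX; apply: eq_bigr => x /sAX xX.
by apply: eq_bigr => y /sBX yX; rewrite /induced xX yX !andbT.
Qed.

Lemma has_cut_dense_subgraphW (R : realFieldType) (T : finType) (e : rel T) (p m m' : R) :
  m' <= m -> has_cut_dense_subgraph e p m -> has_cut_dense_subgraph e p m'.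
Proof.
by move=> lem [U [F [sub [mU cd]]]]; exists U, F; do !split=> //; exact: le_trans mU.
Qed.

Lemma min_deg_le_edges_closed_nbhd (R : realFieldType) (T : finType) (e : rel T) (c : R)
    (S : {set T}) :
  min_deg_ge e c -> c * #|S|%:R <= edges R e (S :|: nbhd e S) (S :|: nbhd e S).
Proof.
move=> hdeg; apply: le_trans (edges_subsetl _ _ _ (subsetUl S (nbhd e S))).
rewrite mulr_natr -sumr_const; apply: ler_sum => x xS.
apply: le_trans (hdeg x) _; rewrite -sum1_card natr_sum big_mkcond [leRHS]big_mkcond /=.
apply: ler_sum => y _; rewrite inE; case exy: (e x y); last by case: ifP.
suff -> : y \in S :|: nbhd e S by [].
by rewrite !inE; apply/orP; right; apply/existsP; exists x; rewrite xS exy.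
Qed.

Lemma heavy_parts_arith (R : realFieldType) (alpha a b m eA eB eAB : R) :
  alpha * (a + b) * (a + b + m) <= eA + eB + 2 * eAB -> eAB <= alpha * a * b ->
  alpha * a * (a + m) <= eA \/ alpha * b * (b + m) <= eB.
Proof.
move=> hAB heAB; case: (leP (alpha * a * (a + m)) eA) => [|hA]; first by left.
case: (leP (alpha * b * (b + m)) eB) => [|hB]; first by right.
have : alpha * (a + b) * (a + b + m) =
  alpha * a * (a + m) + alpha * b * (b + m) + 2 * (alpha * a * b) by ring.
lra.
Qed.

Section HeavySets.
Variables (R : realFieldType) (T : finType) (e : rel T) (p alpha m : R).
Hypotheses (e_sym : symmetric e) (p_le_alpha : p <= alpha).

Definition heavy (X : {set T}) := alpha * #|X|%:R * (#|X|%:R + m) <= edges R e X X.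

Lemma heavy_split (X : {set T}) : heavy X -> ~ cut_dense X (induced e X) p ->
  exists Y : {set T}, [/\ Y \proper X, Y != set0 & heavy Y].
Proof.
move=> hX ncdX.
have [A [B [ABX dAB hlt]]] : exists A B, [/\ A :|: B = X, [disjoint A & B] &
    edges R e A B < p * #|A|%:R * #|B|%:R].
  apply: NNPP => none; apply: ncdX => A B ABX dAB; rewrite leNgt; apply/negP => lt.
  apply: none; exists A, B; split=> //.
  by rewrite e_betweenE edges_induced // -ABX ?subsetUl ?subsetUr in lt.
have pos := le_lt_trans (edges_ge0 _ _ _ _) hlt.
have A0 : A != set0 by apply: contraTneq pos => ->; rewrite cards0 mulr0 mul0r ltxx.
have B0 : B != set0 by apply: contraTneq pos => ->; rewrite cards0 mulr0 ltxx.
have cardX : #|X| = (#|A| + #|B|)%N.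
  by rewrite -ABX cardsU (disjoint_setI0 dAB) cards0 subn0.
have proper_part Y Z : Y :|: Z = X -> [disjoint Y & Z] -> Z != set0 -> Y \proper X.
  move=> YZX dYZ Z0; rewrite properEcard -YZX subsetUl YZX.
  by rewrite -YZX cardsU (disjoint_setI0 dYZ) cards0 subn0 -{1}[#|Y|]addn0 ltn_add2l card_gt0.
have eAB : edges R e A B <= alpha * #|A|%:R * #|B|%:R.
  by apply/ltW/(lt_le_trans hlt); rewrite -!mulrA ler_wpM2r ?mulr_ge0.
move: hX; rewrite /heavy -ABX edges_setU_self // ABX cardX natrD => hX.
case: (heavy_parts_arith hX eAB) => [hA|hB].
  by exists A; split=> //; exact: proper_part ABX dAB B0.
exists B; split=> //; apply: proper_part A0 => //; first by rewrite setUC.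
by rewrite disjoint_sym.
Qed.

Lemma heavy_cut_dense_subset (X : {set T}) : X != set0 -> heavy X ->
  exists2 Y : {set T}, Y \subset X & [/\ Y != set0, heavy Y & cut_dense Y (induced e Y) p].
Proof.
elim: {X}_.+1 {-2}X (ltnSn #|X|) => // n IH X ltXn X0 hX.
have [cdX|ncdX] := classic (cut_dense X (induced e X) p); first by exists X.
have [Y [ltYX Y0 hY]] := heavy_split hX ncdX.
have [Z sZY cdZ] := IH Y (leq_trans (proper_card ltYX) ltXn) Y0 hY.
by exists Z => //; exact: subset_trans sZY (proper_sub ltYX).
Qed.

Lemma heavy_card_ge (X : {set T}) : 0 <= alpha -> X != set0 -> heavy X ->
  alpha * m <= #|X|%:R.
Proof.
move=> alpha0; rewrite -card_gt0 -(ltr0n R) /heavy => x0 hX.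
have := le_trans hX (edges_le_card _ _ _ _).
rewrite -[_ * _ * _]mulrC mulrA ler_pM2r // => hx.
have : 0 <= alpha * #|X|%:R by rewrite mulr_ge0 // ltW.
lra.
Qed.

Lemma heavy_has_cut_dense_subgraph (X : {set T}) : 0 <= alpha -> X != set0 -> heavy X ->
  has_cut_dense_subgraph e p (alpha * m).
Proof.
move=> alpha0 X0 hX; have [Y _ [Y0 hY cdY]] := heavy_cut_dense_subset X0 hX.
exists Y, (induced e Y); split; first exact: induced_subgraph.
by split=> //; exact: heavy_card_ge.
Qed.

End HeavySets.

Theorem lemma3p15 (R : realType) :
  forall Delta eps : R, 0 < Delta -> 0 < eps ->
  exists p0 : R, 0 < p0 /\ forall p : R, 0 < p -> p <= p0 ->
  exists mu0 : R, 0 < mu0 /\ forall mu : R, 0 < mu -> mu <= mu0 ->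
  exists d0 : R, forall d : R, d0 <= d ->
  forall (T : finType) (e : rel T),
    simple_graph e ->
    min_deg_ge e (eps * d) ->
    ~ has_cut_dense_subgraph e p (mu * d) ->
    forall S : {set T}, (#|S|)%:R <= 10 * d ->
      10 * Delta * (#|S|)%:R <= (#|nbhd e S|)%:R.
Proof.
move=> Delta eps Delta0 eps0.
pose K : R := 1 + 10 * Delta; pose alpha := eps / (K * (10 * K + 1)).
have K0 : 0 < K by rewrite /K; lra.
have denom_gt0 : 0 < K * (10 * K + 1) by rewrite mulr_gt0 //; lra.
have alpha0 : 0 < alpha by rewrite divr_gt0.
have alphaK : alpha * (K * (10 * K + 1)) = eps by rewrite mulfVK // gt_eqF.
exists alpha; split=> // p _ p_le; exists alpha; split=> // mu _ mu_le.
exists 0 => d d0 T e [e_sym _] min_deg no_cd S Sd; rewrite leNgt; apply/negP => small.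
set s : R := #|S|%:R in Sd small *; pose W := S :|: nbhd e S; pose w : R := #|W|%:R.
have wKs : w <= K * s.
  have : (#|W| <= #|S| + #|nbhd e S|)%N by exact: leq_card_setU.
  by rewrite -(ler_nat R) natrD -/w -/s /K; lra.
have S0 : S != set0.
  by apply: contraTneq small => S0; rewrite /s S0 cards0 mulr0 -leNgt ler0n.
have W0 : W != set0 by apply: contraNneq S0 => W0; rewrite -subset0 -W0 subsetUl.
have heavyW : heavy e alpha d W.
  apply: le_trans (min_deg_le_edges_closed_nbhd S min_deg); rewrite -/w -/s.
  have wd : w + d <= 10 * K * d + d.
    have : K * s <= K * (10 * d) by rewrite ler_pM2l.
    lra.
  have : alpha * (w * (w + d)) <= alpha * (K * s * (10 * K * d + d)).
    by rewrite ler_pM2l //; apply: ler_pM; rewrite ?addr_ge0 ?ler0n.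
  rewrite -alphaK; lra.
apply/no_cd/(has_cut_dense_subgraphW _ (heavy_has_cut_dense_subgraph e_sym p_le _ W0 heavyW)).
  by rewrite ler_wpM2r.
exact: ltW.
Qed.
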